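(* Let $m>0$, $\gamma>0$, $\alpha,\beta>0$, $c_k=k^{-(1+\alpha\beta)}$, $\lambda_k=k^{-\beta}$ for $k\geq1$, and let $s$ satisfy $0\leq 2s<\alpha\beta$. Then the linear map $L$ defined on $\mathcal{H}_{-s}$ by $$L(x,v,z_1,z_2,\dots)=\Big(v,\ -\tfrac{\gamma}{m}v-\tfrac1m\sum_{k\geq1}\sqrt{c_k}\,z_k,\ -\lambda_1z_1+\sqrt{c_1}\,v,\ -\lambda_2z_2+\sqrt{c_2}\,v,\ \dots\Big)$$ is a bounded linear operator from $\mathcal{H}_{-s}$ to $\mathcal{H}_{-s}$.
   Context: $\mathcal{H}_{-s}$ is the Hilbert space of real sequences $X=(x,v,z_1,z_2,\dots)$ with norm $\|X\|_{-s}^2=x^2+v^2+\sum_{k\geq1}k^{-2s}z_k^2<\infty$. *)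

From Stdlib Require Import Reals.
From Coquelicot Require Import Coquelicot.
Open Scope R_scope.

(* An element X = (x, v, z_1, z_2, ...) of the sequence space.
   Convention: hz X k stands for z_{k+1} (k : nat, k >= 0). *)
Record Hseq := mkHseq { hx : R; hv : R; hz : nat -> R }.

Definition weight (s : R) (k : nat) : R := Rpower (INR (S k)) (- (2 * s)).

Definition in_H (s : R) (X : Hseq) : Prop :=
  ex_series (fun k => weight s k * (hz X k) ^ 2).

Definition normH (s : R) (X : Hseq) : R :=
  sqrt (hx X ^ 2 + hv X ^ 2 + Series (fun k => weight s k * (hz X k) ^ 2)).

Definition Hadd (X Y : Hseq) : Hseq :=
  mkHseq (hx X + hx Y) (hv X + hv Y) (fun k => hz X k + hz Y k).
Definition Hscale (t : R) (X : Hseq) : Hseq :=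
  mkHseq (t * hx X) (t * hv X) (fun k => t * hz X k).

Definition cc (alpha beta : R) (k : nat) : R := Rpower (INR (S k)) (- (1 + alpha * beta)).
Definition lam (beta : R) (k : nat) : R := Rpower (INR (S k)) (- beta).

Definition Lop (m gamma alpha beta : R) (X : Hseq) : Hseq :=
  mkHseq (hv X)
         (- (gamma / m) * hv X - / m * Series (fun k => sqrt (cc alpha beta k) * hz X k))
         (fun k => - lam beta k * hz X k + sqrt (cc alpha beta k) * hv X).

From Stdlib Require Import Reals Lra Psatz FunctionalExtensionality.
From Coquelicot Require Import Coquelicot.
Open Scope R_scope.

(* The only infinite sum in L is the coupling term sum_k sqrt(c_k) z_k.  Since
   c_k = k^(-(1 + alpha beta - 2s)) k^(-2s), AM-GM gives
   |sqrt(c_k) z_k| <= r_k e / 2 + k^(-2s) z_k^2 / (2e) for every e > 0, where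
   r_k = k^(-(1 + alpha beta - 2s)) is summable exactly because 2s < alpha beta;
   taking e = |X|_{-s} bounds the coupling term by a multiple of |X|_{-s}.  The
   other components of L are pointwise bounded since k^(-2s) <= 1 and
   lambda_k <= 1. *)

Lemma Rpower_pos (x y : R) : 0 < Rpower x y.
Proof. apply exp_pos. Qed.

Lemma Rpower_le_1 (x y : R) : 1 <= x -> y <= 0 -> Rpower x y <= 1.
Proof. intros Hx Hy. rewrite <- (Rpower_O x) by lra. now apply Rle_Rpower. Qed.

Lemma one_le_INR_S (k : nat) : 1 <= INR (S k).
Proof. rewrite S_INR. pose proof (pos_INR k). lra. Qed.

Lemma mul_le_amgm (a b e : R) : 0 < e -> a * b <= (a ^ 2 * e + b ^ 2 / e) / 2.
Proof.
  intros He.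
  assert (Hsq : (a ^ 2 * e + b ^ 2 / e) / 2 - a * b = (e * a - b) ^ 2 / (2 * e))
    by (field; lra).
  assert (0 <= (e * a - b) ^ 2 / (2 * e))
    by (apply Rdiv_le_0_compat; [apply pow2_ge_0 | lra]).
  lra.
Qed.

(* The degenerate case n = 0 forces t <= 0 by letting e tend to 0. *)
Lemma le_mul_of_forall_le_amgm (t a b n : R) :
  0 <= a -> 0 <= n -> b <= n ^ 2 ->
  (forall e, 0 < e -> t <= a * e + b / e) -> t <= (a + 1) * n.
Proof.
  intros Ha Hn Hb Ht.
  destruct (Req_dec n 0) as [-> | Hn0].
  - apply Rnot_lt_le. intros Htpos.
    assert (He : 0 < t / (a + 1)) by (apply Rdiv_lt_0_compat; lra).
    specialize (Ht _ He).
    assert (0 <= - b / (t / (a + 1))) by (apply Rdiv_le_0_compat; nra).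
    unfold Rdiv in *.
    assert (a * (t / (a + 1)) < t).
    { apply (Rmult_lt_reg_r (a + 1)); [lra |].
      replace (a * (t / (a + 1)) * (a + 1)) with (a * t) by (field; lra). nra. }
    lra.
  - assert (Hnpos : 0 < n) by lra.
    specialize (Ht n Hnpos).
    assert (b / n <= n).
    { apply (Rmult_le_reg_r n); [lra |].
      replace (b / n * n) with b by (field; lra). nra. }
    lra.
Qed.

Lemma le_sqrt_mul_of_sqr_le (x y K : R) :
  0 <= x -> 0 <= y -> 0 <= K -> x ^ 2 <= K * y ^ 2 -> x <= sqrt K * y.
Proof.
  intros Hx Hy HK Hxy.
  rewrite <- (sqrt_pow2 x Hx), <- (sqrt_pow2 y Hy), <- sqrt_mult
    by (auto using pow2_ge_0).
  now apply sqrt_le_1_alt.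
Qed.

Lemma Series_nonneg (a : nat -> R) : (forall n, 0 <= a n) -> ex_series a -> 0 <= Series a.
Proof.
  intros Ha Hex.
  apply (Rle_trans _ (Series (fun n => 0 * a n))).
  - rewrite Series_scal_l. lra.
  - apply Series_le; [| exact Hex]. intros n. specialize (Ha n). lra.
Qed.

Lemma ex_series_le_R (a b : nat -> R) :
  (forall n, Rabs (a n) <= b n) -> ex_series b -> ex_series a.
Proof. apply (ex_series_le (K := R_AbsRing) (V := R_CompleteNormedModule)). Qed.

Lemma ex_series_of_bounded_partial_sums (a : nat -> R) (M : R) :
  (forall n, 0 <= a n) -> (forall n, sum_f_R0 a n <= M) -> ex_series a.
Proof.
  intros Ha HM. apply ex_series_Reals_1, growing_cv.
  - intros n. simpl. specialize (Ha (S n)). lra.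
  - exists M. intros x [n ->]. apply HM.
Qed.

Lemma ex_Series_le_lin_comb (a b d : nat -> R) (c f : R) :
  (forall n, 0 <= a n <= b n * c + d n * f) -> ex_series b -> ex_series d ->
  ex_series a /\ Series a <= Series b * c + Series d * f.
Proof.
  intros Hle Hb Hd.
  assert (Hcomb : is_series (fun n => b n * c + d n * f) (Series b * c + Series d * f))
    by (apply (is_series_plus (fun n => b n * c) (fun n => d n * f));
        apply is_series_scal_r, Series_correct; assumption).
  split.
  - apply (ex_series_le_R _ (fun n => b n * c + d n * f)); [| eexists; exact Hcomb].
    intros n. specialize (Hle n). rewrite Rabs_pos_eq; lra.
  - rewrite <- (is_series_unique _ _ Hcomb). apply Series_le; [exact Hle |].
    eexists; exact Hcomb.
Qed.

(* Mean value theorem for t |-> t^(-q) on [x, x + 1]. *)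
Lemma Rpower_succ_le_diff (x q : R) : 0 < x -> 0 < q ->
  Rpower (x + 1) (- (1 + q)) <= (Rpower x (- q) - Rpower (x + 1) (- q)) / q.
Proof.
  intros Hx Hq.
  destruct (MVT_cor2 (fun t => Rpower t (- q)) (fun t => - q * Rpower t (- q - 1)) x (x + 1))
    as [c [Hmvt Hc]]; [lra | intros c Hc; apply derivable_pt_lim_power; lra |].
  assert (Hmon : Rpower (x + 1) (- (1 + q)) <= Rpower c (- q - 1)).
  { replace (- q - 1) with (- (1 + q)) by ring.
    rewrite !Rpower_Ropp. apply Rinv_le_contravar; [apply Rpower_pos |].
    apply Rle_Rpower_l; lra. }
  replace (x + 1 - x) with 1 in Hmvt by ring.
  apply (Rmult_le_reg_l q); [lra |].
  replace (q * ((Rpower x (- q) - Rpower (x + 1) (- q)) / q))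
    with (Rpower x (- q) - Rpower (x + 1) (- q)) by (field; lra).
  nra.
Qed.

Lemma ex_series_Rpower_INR_S (q : R) :
  0 < q -> ex_series (fun k => Rpower (INR (S k)) (- (1 + q))).
Proof.
  intros Hq. apply ex_series_incr_1.
  set (u := fun k => Rpower (INR (S k)) (- q)).
  assert (Hstep : forall k, Rpower (INR (S (S k))) (- (1 + q)) <= (u k - u (S k)) / q).
  { intros k. unfold u. rewrite (S_INR (S k)).
    apply Rpower_succ_le_diff; [apply lt_0_INR; lia | exact Hq]. }
  assert (Htelescope : forall n,
    sum_f_R0 (fun k => Rpower (INR (S (S k))) (- (1 + q))) n <= (u 0%nat - u (S n)) / q).
  { induction n as [| n IH]; cbn [sum_f_R0]; [apply (Hstep 0%nat) |].
    specialize (Hstep (S n)). unfold Rdiv in *. lra. }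
  apply (ex_series_of_bounded_partial_sums _ (u 0%nat / q)).
  - intros k. left. apply Rpower_pos.
  - intros n. eapply Rle_trans; [apply Htelescope |].
    unfold Rdiv. apply Rmult_le_compat_r; [left; now apply Rinv_0_lt_compat |].
    pose proof (Rpower_pos (INR (S (S n))) (- q)). unfold u. lra.
Qed.

Section Operator.

Variables (m gamma alpha beta s : R).
Hypotheses (Hbeta : 0 < beta) (Hs : 0 <= 2 * s) (Hsab : 2 * s < alpha * beta).

Definition cc_div_weight (k : nat) : R :=
  Rpower (INR (S k)) (- (1 + (alpha * beta - 2 * s))).

Definition znorm2 (X : Hseq) : R := Series (fun k => weight s k * hz X k ^ 2).

Lemma weight_pos (k : nat) : 0 < weight s k.
Proof. apply Rpower_pos. Qed.

Lemma lam_pos (k : nat) : 0 < lam beta k.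
Proof. apply Rpower_pos. Qed.

Lemma cc_div_weight_pos (k : nat) : 0 < cc_div_weight k.
Proof. apply Rpower_pos. Qed.

Lemma weight_le_1 (k : nat) : weight s k <= 1.
Proof. apply Rpower_le_1; [apply one_le_INR_S | lra]. Qed.

Lemma lam_le_1 (k : nat) : lam beta k <= 1.
Proof. apply Rpower_le_1; [apply one_le_INR_S | lra]. Qed.

Lemma cc_eq_mul_weight (k : nat) : cc alpha beta k = cc_div_weight k * weight s k.
Proof. unfold cc, cc_div_weight, weight. rewrite <- Rpower_plus. f_equal. ring. Qed.

Lemma ex_series_cc_div_weight : ex_series cc_div_weight.
Proof. apply ex_series_Rpower_INR_S. lra. Qed.

Lemma Series_cc_div_weight_ge0 : 0 <= Series cc_div_weight.
Proof.
  apply Series_nonneg; [intros k; left; apply cc_div_weight_pos | apply ex_series_cc_div_weight].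
Qed.

Lemma znorm2_ge0 (X : Hseq) : in_H s X -> 0 <= znorm2 X.
Proof.
  intros HX. apply Series_nonneg; [| exact HX].
  intros k. apply Rmult_le_pos; [left; apply weight_pos | apply pow2_ge_0].
Qed.

Lemma normH_sqr (X : Hseq) :
  in_H s X -> normH s X ^ 2 = hx X ^ 2 + hv X ^ 2 + znorm2 X.
Proof.
  intros HX. apply pow2_sqrt.
  pose proof (znorm2_ge0 X HX). pose proof (pow2_ge_0 (hx X)). pose proof (pow2_ge_0 (hv X)).
  unfold znorm2 in *. lra.
Qed.

Lemma abs_sqrt_cc_mul_le (e z : R) (k : nat) : 0 < e ->
  Rabs (sqrt (cc alpha beta k) * z) <=
  cc_div_weight k / 2 * e + weight s k * z ^ 2 / 2 / e.
Proof.
  intros He. pose proof (cc_div_weight_pos k). pose proof (weight_pos k).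
  rewrite cc_eq_mul_weight, sqrt_mult, Rabs_mult, Rabs_mult, !Rabs_pos_eq, Rmult_assoc
    by (lra || apply sqrt_pos).
  eapply Rle_trans; [apply (mul_le_amgm _ _ e He) |].
  rewrite Rpow_mult_distr, pow2_abs, !pow2_sqrt by lra.
  apply Req_le. field. lra.
Qed.

Lemma Series_abs_coupling_le (X : Hseq) (e : R) : in_H s X -> 0 < e ->
  ex_series (fun k => Rabs (sqrt (cc alpha beta k) * hz X k)) /\
  Series (fun k => Rabs (sqrt (cc alpha beta k) * hz X k)) <=
    Series cc_div_weight * (e / 2) + znorm2 X * / (2 * e).
Proof.
  intros HX He. apply ex_Series_le_lin_comb; [| apply ex_series_cc_div_weight | exact HX].
  intros k. split; [apply Rabs_pos |].
  eapply Rle_trans; [apply (abs_sqrt_cc_mul_le e (hz X k) k He) |].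
  apply Req_le. field. lra.
Qed.

Lemma ex_series_coupling (X : Hseq) :
  in_H s X -> ex_series (fun k => sqrt (cc alpha beta k) * hz X k).
Proof. intros HX. apply ex_series_Rabs, (Series_abs_coupling_le X 1 HX Rlt_0_1). Qed.

Lemma abs_Series_coupling_le (X : Hseq) : in_H s X ->
  Rabs (Series (fun k => sqrt (cc alpha beta k) * hz X k)) <=
  (Series cc_div_weight / 2 + 1) * normH s X.
Proof.
  intros HX.
  apply (le_mul_of_forall_le_amgm _ _ (znorm2 X / 2)).
  - pose proof Series_cc_div_weight_ge0. lra.
  - apply sqrt_pos.
  - rewrite normH_sqr by exact HX.
    pose proof (znorm2_ge0 X HX). pose proof (pow2_ge_0 (hx X)). pose proof (pow2_ge_0 (hv X)).
    lra.
  - intros e He. destruct (Series_abs_coupling_le X e HX He) as [Hex Hle].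
    eapply Rle_trans; [apply Series_Rabs, Hex |].
    eapply Rle_trans; [exact Hle |]. apply Req_le. field. lra.
Qed.

Lemma weight_mul_sqr_hz_Lop_le (z v : R) (k : nat) :
  0 <= weight s k * (- lam beta k * z + sqrt (cc alpha beta k) * v) ^ 2 <=
  weight s k * z ^ 2 * 2 + cc_div_weight k * (2 * v ^ 2).
Proof.
  pose proof (cc_div_weight_pos k). pose proof (weight_pos k). pose proof (lam_pos k).
  pose proof (weight_le_1 k). pose proof (lam_le_1 k).
  assert (Hsqrt : sqrt (cc alpha beta k) ^ 2 = cc_div_weight k * weight s k)
    by (rewrite cc_eq_mul_weight, pow2_sqrt; nra).
  set (w := weight s k) in *. set (l := lam beta k) in *. set (r := cc_div_weight k) in *.
  set (t := sqrt (cc alpha beta k)) in *.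
  split; [apply Rmult_le_pos; [lra | apply pow2_ge_0] |].
  assert (Hsum : (- l * z + t * v) ^ 2 <= 2 * (l ^ 2 * z ^ 2) + 2 * (t ^ 2 * v ^ 2))
    by (pose proof (pow2_ge_0 (l * z + t * v)); nra).
  assert (Hl2 : l ^ 2 <= 1) by nra.
  assert (Hlz : l ^ 2 * z ^ 2 <= z ^ 2)
    by (pose proof (Rmult_le_compat_r _ _ _ (pow2_ge_0 z) Hl2); lra).
  assert (Htv : w * (t ^ 2 * v ^ 2) <= r * v ^ 2).
  { replace (w * (t ^ 2 * v ^ 2)) with ((w * w) * (r * v ^ 2)) by (rewrite Hsqrt; ring).
    assert (Hrv : 0 <= r * v ^ 2) by (apply Rmult_le_pos; [lra | apply pow2_ge_0]).
    assert (Hw2 : w * w <= 1) by nra.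
    pose proof (Rmult_le_compat_r _ _ _ Hrv Hw2). lra. }
  pose proof (pow2_ge_0 z). nra.
Qed.

Lemma znorm2_Lop_le (X : Hseq) : in_H s X ->
  in_H s (Lop m gamma alpha beta X) /\
  znorm2 (Lop m gamma alpha beta X) <= znorm2 X * 2 + Series cc_div_weight * (2 * hv X ^ 2).
Proof.
  intros HX. apply ex_Series_le_lin_comb; [| exact HX | apply ex_series_cc_div_weight].
  intros k. apply weight_mul_sqr_hz_Lop_le.
Qed.

Lemma Lop_linear (t : R) (X Y : Hseq) : in_H s X -> in_H s Y ->
  Lop m gamma alpha beta (Hadd (Hscale t X) Y)
  = Hadd (Hscale t (Lop m gamma alpha beta X)) (Lop m gamma alpha beta Y).
Proof.
  intros HX HY. unfold Lop, Hadd, Hscale; simpl. f_equal.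
  - rewrite (Series_ext _ (fun k => sqrt (cc alpha beta k) * hz X k * t
                                  + sqrt (cc alpha beta k) * hz Y k)) by (intros; ring).
    rewrite Series_plus, Series_scal_r
      by (try apply ex_series_scal_r; apply ex_series_coupling; assumption).
    ring.
  - apply functional_extensionality. intros k. ring.
Qed.

Definition Lop_bound_sqr : R :=
  3 + 2 * (gamma / m) ^ 2 + 2 * Series cc_div_weight
  + 2 * (/ m) ^ 2 * (Series cc_div_weight / 2 + 1) ^ 2.

Lemma Lop_bound_sqr_ge0 : 0 <= Lop_bound_sqr.
Proof.
  unfold Lop_bound_sqr. pose proof Series_cc_div_weight_ge0.
  pose proof (pow2_ge_0 (gamma / m)). pose proof (pow2_ge_0 (/ m)).
  pose proof (pow2_ge_0 (Series cc_div_weight / 2 + 1)). nra.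
Qed.

Lemma normH_Lop_sqr_le (X : Hseq) : in_H s X ->
  normH s (Lop m gamma alpha beta X) ^ 2 <= Lop_bound_sqr * normH s X ^ 2.
Proof.
  intros HX. destruct (znorm2_Lop_le X HX) as [HLX Hz].
  pose proof (abs_Series_coupling_le X HX) as HT.
  pose proof (normH_sqr X HX) as HN.
  rewrite (normH_sqr _ HLX). unfold Lop_bound_sqr. simpl hx. simpl hv.
  set (T := Series (fun k => sqrt (cc alpha beta k) * hz X k)) in *.
  set (A := Series cc_div_weight) in *.
  set (N := normH s X) in *.
  pose proof Series_cc_div_weight_ge0 as HA. fold A in HA.
  pose proof (znorm2_ge0 X HX). pose proof (pow2_ge_0 (hx X)). pose proof (pow2_ge_0 (hv X)).
  assert (Hv2 : hv X ^ 2 <= N ^ 2) by lra.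
  assert (HT2 : T ^ 2 <= (A / 2 + 1) ^ 2 * N ^ 2).
  { rewrite <- Rpow_mult_distr, <- pow2_abs.
    apply pow_incr. split; [apply Rabs_pos | exact HT]. }
  assert (Hv : (- (gamma / m) * hv X - / m * T) ^ 2
               <= 2 * (gamma / m) ^ 2 * hv X ^ 2 + 2 * (/ m) ^ 2 * T ^ 2)
    by (pose proof (pow2_ge_0 (gamma / m * hv X - / m * T)); nra).
  pose proof (Rmult_le_compat_l _ _ _ (pow2_ge_0 (gamma / m)) Hv2).
  pose proof (Rmult_le_compat_l _ _ _ (pow2_ge_0 (/ m)) HT2).
  pose proof (Rmult_le_compat_l _ _ _ HA Hv2).
  lra.
Qed.

End Operator.

Theorem proposition3p1 (m gamma alpha beta s : R) :
  0 < m -> 0 < gamma -> 0 < alpha -> 0 < beta ->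
  0 <= 2 * s -> 2 * s < alpha * beta ->
  (* L is well defined on H_{-s} (the series defining it converges) *)
  (forall X, in_H s X -> ex_series (fun k => sqrt (cc alpha beta k) * hz X k)) /\
  (* L maps H_{-s} into H_{-s} *)
  (forall X, in_H s X -> in_H s (Lop m gamma alpha beta X)) /\
  (* L is linear on H_{-s} *)
  (forall (t : R) X Y, in_H s X -> in_H s Y ->
     Lop m gamma alpha beta (Hadd (Hscale t X) Y)
     = Hadd (Hscale t (Lop m gamma alpha beta X)) (Lop m gamma alpha beta Y)) /\
  (* L is bounded *)
  (exists C : R, 0 <= C /\
     forall X, in_H s X -> normH s (Lop m gamma alpha beta X) <= C * normH s X).
Proof.
  intros _ _ _ Hbeta Hs Hsab.
  split; [| split; [| split]].
  - exact (ex_series_coupling alpha beta s Hsab).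
  - intros X HX. apply (znorm2_Lop_le m gamma alpha beta s Hbeta Hs Hsab X HX).
  - exact (Lop_linear m gamma alpha beta s Hsab).
  - exists (sqrt (Lop_bound_sqr m gamma alpha beta s)). split; [apply sqrt_pos |].
    intros X HX. apply le_sqrt_mul_of_sqr_le; [apply sqrt_pos | apply sqrt_pos | |].
    + exact (Lop_bound_sqr_ge0 m gamma alpha beta s Hsab).
    + exact (normH_Lop_sqr_le m gamma alpha beta s Hbeta Hs Hsab X HX).
Qed.
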